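(* For a tournament $\mathrel{W}$ on $\mathcal{X}$, the following are equivalent: (1) $\mathrel{W}$ is not a ranking (i.e. is not transitive); (2) for some ranking $\succ$ on $\mathcal{X}$ (the chair's preference), the chair benefits from agenda-setting under $\mathrel{W}$; (3) for every ranking $\succ$ on $\mathcal{X}$, the chair benefits from agenda-setting under $\mathrel{W}$.
   Context: Let $\mathcal{X}$ be a finite set of alternatives. A proto-ranking is an irreflexive transitive relation; a ranking is a total proto-ranking; a tournament is a total asymmetric relation on $\mathcal{X}$. Interaction: given a tournament $\mathrel{W}$, start from $R_0=\varnothing$; in each period with $R_{t-1}$ not total the chair offers a pair $\{x,y\}$ unranked by $R_{t-1}$, the winner is $x$ if $x\mathrel{W}y$ and $y$ otherwise, and $R_t$ is the transitive closure of $R_{t-1}\cup\{(\text{winner},\text{loser})\}$; stop when $R_t$ is total. A strategy assigns to each non-terminal history a pair unranked at it; its outcome under $\mathrel{W}$ is the final ranking. A ranking is $\mathrel{W}$-feasible if it is the outcome under $\mathrel{W}$ of some strategy. Given the chair's preference $\succ$ (a ranking), $R$ is more aligned with $\succ$ than $R'$ if for all $x\succ y$, $xR'y$ implies $xRy$; a ranking is $\mathrel{W}$-unimprovable if no other $\mathrel{W}$-feasible ranking is more aligned with $\succ$. Given $\succ$, the chair benefits from agenda-setting under $\mathrel{W}$ if there exists a $\mathrel{W}$-feasible ranking that is not $\mathrel{W}$-unimprovable. *)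

From mathcomp Require Import all_boot.
Set Implicit Arguments. Unset Strict Implicit. Unset Printing Implicit Defensive.

Section Agenda.
Variable T : finType.

Definition tclos (R : rel T) : rel T :=
  fun x y => [exists z, R x z && connect R z y].

Definition irreflexiveR (R : rel T) : Prop := forall x, ~~ R x x.
Definition transitiveR (R : rel T) : Prop :=
  forall x y z, R x y -> R y z -> R x z.
Definition asymmetricR (R : rel T) : Prop := forall x y, R x y -> ~~ R y x.
Definition totalb (R : rel T) : bool :=
  [forall x, forall y, (x != y) ==> (R x y || R y x)].

Definition proto_ranking (R : rel T) : Prop := irreflexiveR R /\ transitiveR R.
Definition ranking (R : rel T) : Prop := proto_ranking R /\ totalb R.
Definition tournament (W : rel T) : Prop := totalb W /\ asymmetricR W.

Definition unranked (R : rel T) (x y : T) : bool :=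
  [&& x != y, ~~ R x y & ~~ R y x].

Definition step (R : rel T) (p : T * T) : rel T :=
  tclos (fun x y => R x y || ((x, y) == p)).

Definition empty_rel : rel T := fun _ _ => false.

(* A history is the sequence of (winner, loser) results so far (this records
   both the offered pair and its winner). *)
Definition history := seq (T * T).

Definition R_of (h : history) : rel T := foldl step empty_rel h.

Fixpoint legal_from (R : rel T) (h : history) : bool :=
  match h with
  | [::] => true
  | p :: h' => unranked R p.1 p.2 && legal_from (step R p) h'
  end.
Definition legal (h : history) : bool := legal_from empty_rel h.

Definition strategy := history -> T * T.

Definition valid_strategy (s : strategy) : Prop :=
  forall h, legal h -> ~~ totalb (R_of h) -> unranked (R_of h) (s h).1 (s h).2.

Fixpoint play (W : rel T) (s : strategy) (fuel : nat) (h : history) : rel T :=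
  match fuel with
  | 0 => R_of h
  | fuel'.+1 =>
      if totalb (R_of h) then R_of h
      else let x := (s h).1 in let y := (s h).2 in
           play W s fuel' (rcons h (if W x y then (x, y) else (y, x)))
  end.

(* each period adds a new pair to R, so #|T|*#|T| periods suffice *)
Definition outcome (W : rel T) (s : strategy) : rel T :=
  play W s (#|T| * #|T|) [::].

Definition feasible (W R : rel T) : Prop :=
  ranking R /\ exists s : strategy, valid_strategy s /\ outcome W s =2 R.

Definition more_aligned (pref R R' : rel T) : Prop :=
  forall x y, pref x y -> R' x y -> R x y.

Definition unimprovable (W pref R : rel T) : Prop :=
  ~ exists R', [/\ feasible W R', ~ (R' =2 R) & more_aligned pref R' R].

Definition benefits (W pref : rel T) : Prop :=
  exists R, feasible W R /\ ~ unimprovable W pref R.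

End Agenda.

From mathcomp Require Import all_boot zify.
Set Implicit Arguments. Unset Strict Implicit. Unset Printing Implicit Defensive.

(* If W is transitive, every offered pair is decided as W decides it, so the
   ranking built during a play stays inside W and the only feasible ranking is W
   itself: no feasible ranking can be improved upon.

   Otherwise, use that every Hamiltonian path of W is feasible: let the chair
   offer adjacent pairs of the path, each of which is won by the earlier
   alternative; while the ranking is not total, some adjacent pair is still
   unranked. Insert the alternatives one at a time into a W-path, from the least
   to the most preferred by the chair, each either as low or as high as the path
   allows. The high chain ranks each newly inserted, hence more preferred,
   alternative at least as high as the low chain does, so it is more aligned with
   the chair's preference; and if the two chains coincided, the low chain would
   order every pair as W does, making W transitive. *)

Section AgendaSetting.
Variable T : finType.
Implicit Types (Q R W pref : rel T) (h : history T) (sigma : strategy T) (s : seq T).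

Lemma proto_ranking_asym R : proto_ranking R -> asymmetricR R.
Proof. by move=> [irr tr] x y Rxy; apply/negP => /(tr _ _ _ Rxy); apply/negP. Qed.

Lemma totalb_flip R x y : totalb R -> x != y -> ~~ R x y -> R y x.
Proof. by move=> /forallP totR xy; case/orP: (implyP (forallP (totR x) y) xy) => [-> |]. Qed.

Lemma total_subrel_eq Q R : totalb Q -> asymmetricR R -> subrel Q R -> Q =2 R.
Proof.
move=> totQ asymR QR x y; apply/idP/idP => [/QR // | Rxy].
have xy : x != y.
  by apply: contraTneq Rxy => ->; apply/negP => Ryy; move/negP: (asymR _ _ Ryy).
by apply: contraTT (asymR _ _ Rxy) => /(totalb_flip totQ xy)/QR ->.
Qed.

Lemma connect_sub_trans (e : rel T) R : subrel e R -> transitiveR R ->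
  forall x y, connect e x y -> x = y \/ R x y.
Proof.
move=> eR trR x y /connectP [p]; elim: p x => [|z p IH] x /=; first by move=> _ ->; left.
move=> /andP [exz pz] yl; right.
by case: (IH z pz yl) => [<-|Rzy]; [exact: eR | exact: trR (eR _ _ exz) Rzy].
Qed.

Lemma step_sub Q R p : subrel Q R -> R p.1 p.2 -> transitiveR R -> subrel (step Q p) R.
Proof.
move=> QR Rp trR x y /existsP [z /andP [exz czy]].
have eR : subrel (fun u v => Q u v || ((u, v) == p)) R.
  by move=> u v /orP [/QR // | /eqP uvp]; move: Rp; rewrite -uvp.
case: (connect_sub_trans eR trR czy) => [<- | Rzy]; first exact: eR.
exact: trR (eR _ _ exz) Rzy.
Qed.

Lemma step_mono Q p : subrel Q (step Q p).
Proof. by move=> x y Qxy; apply/existsP; exists y; rewrite Qxy connect0. Qed.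

Lemma step_new Q p : step Q p p.1 p.2.
Proof. by apply/existsP; exists p.2; rewrite -surjective_pairing eqxx orbT connect0. Qed.

Lemma step_trans Q p : transitiveR (step Q p).
Proof.
move=> x y z /existsP [u /andP [exu cuy]] /existsP [v /andP [eyv cvz]].
apply/existsP; exists u; rewrite exu (connect_trans cuy) //.
by apply: connect_trans cvz; apply: connect1.
Qed.

Lemma R_of_rcons h p : R_of (rcons h p) = step (R_of h) p.
Proof. by rewrite /R_of foldl_rcons. Qed.

Lemma R_of_trans h : transitiveR (R_of h).
Proof. by case/lastP: h => [|h p] //; rewrite R_of_rcons; apply: step_trans. Qed.

Lemma legal_rcons h p : legal h -> unranked (R_of h) p.1 p.2 -> legal (rcons h p).
Proof.
rewrite /legal /R_of; elim: h (@empty_rel T) => [|q h IH] R /=; first by rewrite andbT.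
by move=> /andP [-> /IH].
Qed.

Definition rel_card R := #|[pred p : T * T | R p.1 p.2]|.

Lemma rel_card_step R p : ~~ R p.1 p.2 -> rel_card R < rel_card (step R p).
Proof.
move=> Rp; apply/proper_card/properP; split; last by exists p; rewrite !inE ?step_new.
by apply/subsetP => q; rewrite !inE; apply: step_mono.
Qed.

Lemma rel_card_full R : #|T| * #|T| <= rel_card R -> totalb R.
Proof.
move=> full; have allR : forall p : T * T, R p.1 p.2.
  move=> p; apply: contraTT full => Rp; rewrite -ltnNge -card_prod.
  by apply/proper_card/properP; split; [apply/subsetP | exists p].
by apply/forallP => x; apply/forallP => y; rewrite (allR (x, y)) implybT.
Qed.

Definition winner (W : rel T) (p : T * T) : T * T :=
  if W p.1 p.2 then (p.1, p.2) else (p.2, p.1).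

Lemma play_succ W sigma n h : play W sigma n.+1 h =
  if totalb (R_of h) then R_of h else play W sigma n (rcons h (winner W (sigma h))).
Proof. by []. Qed.

Lemma unranked_winner W R p :
  unranked R p.1 p.2 -> unranked R (winner W p).1 (winner W p).2.
Proof.
by rewrite /winner /unranked; case: ifP => //= _ /and3P [xy -> ->]; rewrite eq_sym xy.
Qed.

Lemma play_total W sigma : valid_strategy sigma -> forall n h, legal h ->
  #|T| * #|T| <= rel_card (R_of h) + n -> totalb (play W sigma n h).
Proof.
move=> valid; elim=> [|n IH] h legal_h; first by rewrite addn0; apply: rel_card_full.
rewrite play_succ; case: ifP => // /negbT not_total enough.
have /and3P [_ fresh _] := unranked_winner W (valid h legal_h not_total).
apply: IH; first exact/legal_rcons/unranked_winner/valid.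
rewrite R_of_rcons (leq_trans enough) // addnS -addSn leq_add2r.
exact: (rel_card_step fresh).
Qed.

Lemma outcome_total W sigma : valid_strategy sigma -> totalb (outcome W sigma).
Proof. by move=> valid; apply: play_total; rewrite ?leq_addl. Qed.

Lemma play_sub W R sigma : transitiveR R -> valid_strategy sigma ->
  (forall h, legal h -> subrel (R_of h) R -> ~~ totalb (R_of h) ->
     R (winner W (sigma h)).1 (winner W (sigma h)).2) ->
  forall n h, legal h -> subrel (R_of h) R -> subrel (play W sigma n h) R.
Proof.
move=> trR valid win_R; elim=> [|n IH] h legal_h hR //.
rewrite play_succ; case: ifP => // /negbT not_total.
apply: IH; first exact/legal_rcons/unranked_winner/valid.
by rewrite R_of_rcons; apply: step_sub => //; apply: win_R.
Qed.

(** * Hamiltonian paths are feasible *)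

Definition before s : rel T := fun x y => index x s < index y s.

Lemma beforeNC s x y : x \in s -> y \in s -> x != y -> before s x y = ~~ before s y x.
Proof.
move=> xs ys xy; rewrite /before -leqNgt ltn_neqAle andb_idl //.
by move=> _; apply: contra xy => /eqP idx; rewrite -(nth_index x xs) idx nth_index.
Qed.

Lemma before_ranking s : (forall x, x \in s) -> ranking (before s).
Proof.
move=> full; split; first by split=> [x | x y z]; [rewrite /before ltnn | exact: ltn_trans].
apply/forallP => x; apply/forallP => y; apply/implyP => xy.
by rewrite (beforeNC (full x) (full y) xy) orNb.
Qed.

Lemma before_sub s Q : (forall x, x \in s) -> transitiveR Q -> sorted Q s ->
  subrel (before s) Q.
Proof.
move=> full trQ sorted_s x y xy; rewrite -(nth_index x (full x)) -(nth_index x (full y)).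
by apply: (sorted_ltn_nth (fun y x z => trQ x y z)) => //; rewrite inE index_mem.
Qed.

Definition adjacent s (p : T * T) := index p.2 s == (index p.1 s).+1.

Lemma adjacent_sorted W s p : (forall x, x \in s) -> sorted W s -> adjacent s p ->
  W p.1 p.2 /\ before s p.1 p.2.
Proof.
move=> full sorted_s /eqP adj; split; last by rewrite /before adj.
have p2s : index p.2 s < size s by rewrite index_mem.
move/(sortedP p.1): sorted_s => /(_ (index p.1 s)).
by rewrite -adj !nth_index => // /(_ p2s).
Qed.

Lemma adjacent_unranked s Q : uniq s -> (forall x, x \in s) -> transitiveR Q ->
  subrel Q (before s) -> ~~ totalb Q -> exists p, unranked Q p.1 p.2 && adjacent s p.
Proof.
move=> uniq_s full trQ Q_before not_total; apply/existsP.
move: not_total; apply: contraNT => /existsPn none.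
apply/forallP => x0; apply/forallP => y; apply/implyP => x0y.
have sorted_s : sorted Q s.
  apply/(sortedP x0) => i lt_i; have lt_i' := ltnW lt_i.
  have := none (nth x0 s i, nth x0 s i.+1).
  rewrite /adjacent /unranked /= !index_uniq // nth_uniq // eqxx andbT.
  rewrite (ltn_eqF (ltnSn i)) /= negb_and !negbK => /orP [// | /Q_before].
  by rewrite /before !index_uniq // ltnNge leqnSn.
have [[_ _] /forallP total_before] := before_ranking full.
case/orP: (implyP (forallP (total_before x0) y) x0y).
  by move/(before_sub full trQ sorted_s) ->.
by move/(before_sub full trQ sorted_s) ->; rewrite orbT.
Qed.

Lemma winner_rel W p : totalb W -> p.1 != p.2 -> W (winner W p).1 (winner W p).2.
Proof. by move=> totW p12; rewrite /winner; case: ifP => // /negbT; apply: totalb_flip. Qed.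

(* A valid strategy must offer an unranked pair at every legal history, also at
   those its own play never reaches, hence the fallback. *)
Definition adjacent_strategy s (x0 : T) : strategy T := fun h =>
  if [pick p | unranked (R_of h) p.1 p.2 && adjacent s p] is Some p then p
  else odflt (x0, x0) [pick p | unranked (R_of h) p.1 p.2].

Lemma adjacent_strategy_valid s x0 : valid_strategy (adjacent_strategy s x0).
Proof.
move=> h _ not_total; rewrite /adjacent_strategy.
case: pickP => [p /andP [] // | _]; case: pickP => [p // | none].
move: not_total => /forallPn [x /forallPn [y]]; rewrite negb_imply negb_or => xy.
by have := none (x, y); rewrite /unranked /= xy.
Qed.

Lemma feasible_sorted W s (x0 : T) : uniq s -> (forall x, x \in s) -> sorted W s ->
  feasible W (before s).
Proof.
move=> uniq_s full sorted_s; have [before_proto _] := before_ranking full.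
split; first exact: before_ranking.
have valid := adjacent_strategy_valid s x0.
exists (adjacent_strategy s x0); split => //.
apply: total_subrel_eq (outcome_total _ valid) (proto_ranking_asym before_proto) _.
apply: (play_sub before_proto.2 valid) => // h _ h_before not_total.
rewrite /adjacent_strategy.
case: pickP => [p /andP [_ adj] | none]; last first.
  have [p] := adjacent_unranked uniq_s full (@R_of_trans h) h_before not_total.
  by rewrite none.
by have [Wp before_p] := adjacent_sorted full sorted_s adj; rewrite /winner Wp.
Qed.

Lemma feasible_ranking_eq W R : ranking W -> feasible W R -> R =2 W.
Proof.
move=> [protoW totW] [_ [sigma [valid out]]] x y; rewrite -out.
apply: total_subrel_eq (outcome_total _ valid) (proto_ranking_asym protoW) _ x y.
apply: (play_sub protoW.2 valid) => // h legal_h _ not_total; apply: winner_rel => //.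
by case/and3P: (valid h legal_h not_total).
Qed.

Lemma ranking_sorted_enum pref : ranking pref -> exists2 s, sorted pref s & forall x, x \in s.
Proof.
move=> [[irr tr] /forallP tot].
pose le x y := (x == y) || pref x y.
have le_total : total le.
  move=> x y; rewrite /le; case: eqVneq => //= xy.
  by rewrite (implyP (forallP (tot x) y)).
have le_trans : transitive le.
  move=> y x z /predU1P [-> // | pxy] /predU1P [<- | pyz]; rewrite /le ?pxy ?orbT //.
  by rewrite (tr _ _ _ pxy pyz) orbT.
exists (sort le (enum T)); last by move=> x; rewrite mem_sort mem_enum.
apply/pairwise_sorted/(@sub_pairwise T [rel x y : T | le x y && (x != y)]).
  by move=> x y /andP [/predU1P [-> | //]]; rewrite eqxx.
by rewrite pairwise_relI -sorted_pairwise // sort_sorted // -uniq_pairwise sort_uniq enum_uniq.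
Qed.

Lemma ranking_no_benefits W pref : ranking W -> ~ benefits W pref.
Proof.
move=> rankW [R [feasR]]; apply=> -[R' [feasR' R'R _]]; apply: R'R => x y.
by rewrite (feasible_ranking_eq rankW feasR') (feasible_ranking_eq rankW feasR).
Qed.

Definition ins k (z : T) s := take k s ++ z :: drop k s.

Lemma ins0 z s : ins 0 z s = z :: s.
Proof. by rewrite /ins take0 drop0. Qed.

Lemma insS k z y s : ins k.+1 z (y :: s) = y :: ins k z s.
Proof. by []. Qed.

Lemma ins_nil k z : ins k z [::] = [:: z].
Proof. by case: k. Qed.

Lemma perm_ins k z s : perm_eq (ins k z s) (z :: s).
Proof. by rewrite /ins -cat1s perm_catCA cat_take_drop. Qed.

Lemma mem_ins k z s : ins k z s =i z :: s.
Proof. exact/perm_mem/perm_ins. Qed.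

Lemma index_ins k z s a : a \in s -> a != z ->
  index a (ins k z s) = if index a s < k then index a s else (index a s).+1.
Proof.
elim: s k => [|y s IH] k // a_in az.
case: k => [|k]; first by rewrite ins0 /= eq_sym (negbTE az).
rewrite insS /=; move: a_in; rewrite inE eq_sym; case: eqVneq => //= ya a_in.
by rewrite IH // ltnS; case: ifP.
Qed.

Lemma index_ins_new k z s : z \notin s -> index z (ins k z s) = minn k (size s).
Proof.
move=> zs; rewrite /ins index_cat (negbTE (contra (@mem_take _ _ _ _) zs)) /= eqxx addn0.
by rewrite size_take; case: ltnP => ?; lia.
Qed.

Lemma before_ins k z s a b : a \in s -> b \in s -> z \notin s ->
  before (ins k z s) a b = before s a b.
Proof.
move=> a_in b_in zs; have az : a != z by apply: contraNneq zs => <-.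
have bz : b != z by apply: contraNneq zs => <-.
rewrite /before !index_ins //.
by case: (ltnP (index a s) k) => ?; case: (ltnP (index b s) k) => ?; apply/idP/idP; lia.
Qed.

Lemma before_ins_new k z s a : a \in s -> z \notin s ->
  before (ins k z s) z a = (k <= index a s).
Proof.
move=> a_in zs; have az : a != z by apply: contraNneq zs => <-.
have lt_a : index a s < size s by rewrite index_mem.
rewrite /before index_ins_new // index_ins //.
by case: (ltnP (index a s) k) => ?; apply/idP/idP; lia.
Qed.

(** * Low and high insertion chains in a tournament *)

Section Tournament.
Variable W : rel T.
Hypothesis tourW : tournament W.

Lemma tournamentNC x y : x != y -> W x y = ~~ W y x.
Proof.
move=> xy; apply/idP/idP => [/tourW.2 // | ].
by apply: totalb_flip tourW.1 _; rewrite eq_sym.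
Qed.

Lemma tournament_irr x : W x x = false.
Proof. by apply/negP => Wxx; have := tourW.2 _ _ Wxx; rewrite Wxx. Qed.

Lemma tournament_ranking : transitiveR W -> ranking W.
Proof.
by move=> trW; split; [split=> // x; rewrite tournament_irr | exact: tourW.1].
Qed.

(* The lowest and highest positions at which [z] can be inserted into a
   [W]-path: just after the last alternative beating [z], and just before the
   first one beaten by [z]. *)
Fixpoint low_pos z s : nat :=
  if s is _ :: s' then (if has (W^~ z) s then (low_pos z s').+1 else 0) else 0.

Definition high_pos z s := find (W z) s.

Lemma index_lt_low_pos z s a : a \in s -> W a z -> index a s < low_pos z s.
Proof.
elim: s => [|y s IH] //= a_in Waz.
have /= -> : has (W^~ z) (y :: s) by apply/hasP; exists a.
by move: a_in; rewrite inE eq_sym; case: eqVneq => //= ya a_in; rewrite ltnS IH.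
Qed.

Lemma high_pos_le_index z s a : a \in s -> W z a -> high_pos z s <= index a s.
Proof.
move=> a_in Wza; rewrite leqNgt; apply/negP => /(before_find a).
by rewrite nth_index // Wza.
Qed.

Lemma path_ins_high x z s : z \notin s -> path W x s -> W x z ->
  path W x (ins (high_pos z s) z s).
Proof.
elim: s x => [|y s IH] x; first by rewrite ins_nil /= => _ _ ->.
rewrite inE negb_or => /andP [zy zs] /andP [Wxy path_s] Wxz; rewrite [high_pos _ _]/=.
case: ifP => Wzy; first by rewrite ins0 /= Wxz Wzy.
by rewrite insS /= Wxy IH // (totalb_flip tourW.1 zy) ?Wzy.
Qed.

Lemma sorted_ins_high z s : z \notin s -> sorted W s -> sorted W (ins (high_pos z s) z s).
Proof.
case: s => [|y s]; first by rewrite ins_nil.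
rewrite inE negb_or => /andP [zy zs] path_s; rewrite [high_pos _ _]/=.
case: ifP => Wzy; first by rewrite ins0 /= Wzy.
by rewrite insS /= path_ins_high // (totalb_flip tourW.1 zy) ?Wzy.
Qed.

Lemma path_ins_low x z s : z \notin s -> path W x s -> has (W^~ z) s || W x z ->
  path W x (ins (low_pos z s) z s).
Proof.
elim: s x => [|y s IH] x; first by rewrite ins_nil /= => _ _ ->.
rewrite inE negb_or => /andP [zy zs] /andP [Wxy path_s]; rewrite [low_pos _ _]/=.
case: ifP => [has_ys _ | /norP [Wyz has_s]]; first by rewrite insS /= Wxy IH // orbC.
rewrite ins0 /= (negbTE Wyz) (negbTE has_s) /= => ->.
by rewrite (totalb_flip tourW.1 _ Wyz) // eq_sym.
Qed.

Lemma sorted_ins_low z s : z \notin s -> sorted W s -> sorted W (ins (low_pos z s) z s).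
Proof.
case: s => [|y s]; first by rewrite ins_nil.
rewrite inE negb_or => /andP [zy zs] path_s; rewrite [low_pos _ _]/=.
case: ifP => [has_ys | /norP [Wyz _]]; first by rewrite insS /= path_ins_low // orbC.
by rewrite ins0 /= (totalb_flip tourW.1 _ Wyz) // eq_sym.
Qed.

Lemma before_ins_low z s a : a \in s -> z \notin s ->
  before (ins (low_pos z s) z s) z a -> W z a.
Proof.
move=> a_in zs; rewrite before_ins_new // => low_le.
have za : z != a by apply: contraNneq zs => ->.
apply: totalb_flip tourW.1 _ _; first by rewrite eq_sym.
by apply: contraL low_le => /(index_lt_low_pos a_in); rewrite -ltnNge.
Qed.

Lemma before_ins_high z s a : a \in s -> z \notin s -> W z a ->
  before (ins (high_pos z s) z s) z a.
Proof. by move=> a_in zs Wza; rewrite before_ins_new // high_pos_le_index. Qed.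

Definition insertion_chain (pos : T -> seq T -> nat) : seq T -> seq T :=
  foldr (fun z s => ins (pos z s) z s) [::].

Lemma perm_insertion_chain pos l : perm_eq (insertion_chain pos l) l.
Proof.
elim: l => //= z l IH.
by apply: perm_trans (perm_ins _ _ _) _; rewrite perm_cons.
Qed.

Lemma mem_insertion_chain pos l : insertion_chain pos l =i l.
Proof. exact/perm_mem/perm_insertion_chain. Qed.

Lemma sorted_low_chain l : uniq l -> sorted W (insertion_chain low_pos l).
Proof.
elim: l => //= z l IH /andP [zl uniq_l].
by apply: sorted_ins_low; rewrite ?mem_insertion_chain ?IH.
Qed.

Lemma sorted_high_chain l : uniq l -> sorted W (insertion_chain high_pos l).
Proof.
elim: l => //= z l IH /andP [zl uniq_l].
by apply: sorted_ins_high; rewrite ?mem_insertion_chain ?IH.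
Qed.

Lemma high_chain_more_aligned pref l : proto_ranking pref -> sorted pref l ->
  forall x y, x \in l -> y \in l -> pref x y ->
  before (insertion_chain low_pos l) x y -> before (insertion_chain high_pos l) x y.
Proof.
move=> [irr tr]; elim: l => //= z l IH sorted_zl.
have z_top : all (pref z) l by apply: order_path_min sorted_zl => y x u; apply: tr.
have zl : z \notin l by apply/negP => /(allP z_top); apply/negP.
set sL := insertion_chain low_pos l; set sH := insertion_chain high_pos l.
have zL : z \notin sL by rewrite mem_insertion_chain.
have zH : z \notin sH by rewrite mem_insertion_chain.
move=> x y; rewrite !inE => /predU1P [-> | xl] /predU1P [-> | yl] pxy.
- by rewrite /before ltnn.
- move=> before_L; apply: before_ins_high; rewrite ?mem_insertion_chain //.
  by apply: before_ins_low before_L; rewrite ?mem_insertion_chain.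
- by have := irr x; rewrite (tr _ _ _ pxy (allP z_top x xl)).
- rewrite !before_ins ?mem_insertion_chain //.
  exact: IH (path_sorted sorted_zl) x y xl yl pxy.
Qed.

Lemma low_chain_tournament l : uniq l ->
  (forall x y, x \in l -> y \in l ->
     before (insertion_chain low_pos l) x y = before (insertion_chain high_pos l) x y) ->
  forall x y, x \in l -> y \in l -> W x y = before (insertion_chain low_pos l) x y.
Proof.
elim: l => //= z l IH /andP [zl uniq_l] agree.
set sL := insertion_chain low_pos l; set sH := insertion_chain high_pos l.
have zL : z \notin sL by rewrite mem_insertion_chain.
have zH : z \notin sH by rewrite mem_insertion_chain.
have W_l : forall x y, x \in l -> y \in l -> W x y = before sL x y.
  apply: IH => // x y xl yl; have := agree x y; rewrite !inE xl yl !orbT.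
  by rewrite !before_ins ?mem_insertion_chain //; apply.
have W_z : forall y, y \in l -> W z y = before (ins (low_pos z sL) z sL) z y.
  move=> y yl; apply/idP/idP => [Wzy | ].
    rewrite agree ?inE ?eqxx ?yl ?orbT //.
    by apply: before_ins_high; rewrite ?mem_insertion_chain.
  by apply: before_ins_low; rewrite ?mem_insertion_chain.
move=> x y; rewrite !inE => /predU1P [-> | xl] /predU1P [-> | yl].
- by rewrite tournament_irr /before ltnn.
- exact: W_z.
- have xz : x != z by apply: contraNneq zl => <-.
  have x_in : x \in ins (low_pos z sL) z sL.
    by rewrite mem_ins inE mem_insertion_chain xl orbT.
  have z_in : z \in ins (low_pos z sL) z sL by rewrite mem_ins mem_head.
  by rewrite tournamentNC // W_z // (beforeNC x_in z_in xz).
- by rewrite before_ins ?mem_insertion_chain // W_l.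
Qed.

Lemma not_ranking_benefits pref : ~ ranking W -> ranking pref -> benefits W pref.
Proof.
move=> not_rankW rank_pref; have [[irr tr] _] := rank_pref.
have [u sorted_u full_u] := ranking_sorted_enum rank_pref.
have uniq_u : uniq u.
  by apply: sorted_uniq sorted_u => [y x z | x]; [apply: tr | apply/negbTE].
set sL := insertion_chain low_pos u; set sH := insertion_chain high_pos u.
have full_L : forall x, x \in sL by move=> x; rewrite mem_insertion_chain.
have full_H : forall x, x \in sH by move=> x; rewrite mem_insertion_chain.
have uniq_L : uniq sL by rewrite (perm_uniq (perm_insertion_chain _ _)).
have uniq_H : uniq sH by rewrite (perm_uniq (perm_insertion_chain _ _)).
have [/forallP agree | /forallPn [x /forallPn [y differ]]] :=
  boolP [forall x, forall y, before sL x y == before sH x y].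
  case: not_rankW; apply: tournament_ranking => a b c.
  have W_L := low_chain_tournament uniq_u (fun x y _ _ => eqP (forallP (agree x) y)).
  by rewrite !W_L //; apply: ltn_trans.
exists (before sL); split.
  exact: (feasible_sorted x uniq_L full_L (sorted_low_chain uniq_u)).
case; exists (before sH); split.
- exact: (feasible_sorted x uniq_H full_H (sorted_high_chain uniq_u)).
- by move=> eq_HL; move: differ; rewrite eq_HL eqxx.
- by move=> a b; apply: high_chain_more_aligned.
Qed.

End Tournament.
End AgendaSetting.

Theorem proposition6 (T : finType) (W : rel T) (hW : tournament W) :
  [/\ ~ ranking W <-> (exists pref : rel T, ranking pref /\ benefits W pref),
      (exists pref : rel T, ranking pref /\ benefits W pref) <->
        (forall pref : rel T, ranking pref -> benefits W pref)
    & ~ ranking W <-> (forall pref : rel T, ranking pref -> benefits W pref)].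
Proof.
have [pref0 rank_pref0] : exists pref : rel T, ranking pref.
  by exists (before (enum T)); apply: before_ranking => x; rewrite mem_enum.
have one_three pref := @not_ranking_benefits T W hW pref.
have two_one (pref : rel T) : benefits W pref -> ~ ranking W.
  by move=> benefit rankW; apply: ranking_no_benefits rankW benefit.
split; split.
- by move=> not_rankW; exists pref0; split; last apply: one_three.
- by move=> [pref [_ /two_one]].
- by move=> [pref [_ /two_one not_rankW]] pref' /(one_three pref' not_rankW).
- by move=> all; exists pref0; split; last apply: all.
- by move=> not_rankW pref /(one_three pref not_rankW).
- by move=> /(_ pref0 rank_pref0) /two_one.
Qed.
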